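(* Let $k\ge 1$ and $t\ge 2$. Let $\mathbf C$ be the set of all binary linear $t$-CIS $[tk,k]$ codes, and let the symmetric group $S_{tk}$ act on $\mathbf C$ by permuting coordinates. Let $\mathbf C_{sys}$ be the set of all $t$-CIS $[tk,k]$ codes having a generator matrix of the form $(I_k\mid A_1\mid\cdots\mid A_{t-1})$ with all $A_j\in GL(k,2)$. Let $C_1,\dots,C_s$ be representatives of the distinct $S_{tk}$-orbits on $\mathbf C$, each chosen in $\mathbf C_{sys}$. Then $$g_k^{\,t-1}=\sum_{i=1}^s\bigl|\mathrm{Orb}_{S_{tk}}(C_i)\cap\mathbf C_{sys}\bigr|,$$ where $g_k=|GL(k,2)|$ and $\mathrm{Orb}_{S_{tk}}(C_i)$ is the orbit of $C_i$.
   Context: A binary linear $[tk,k]$ code is $t$-CIS if its coordinate set can be partitioned into $t$ pairwise disjoint information sets, an information set being a set of $k$ coordinates whose columns in a generator matrix are linearly independent. $I_k$ is the $k\times k$ identity matrix. *)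

From HB Require Import structures.
From mathcomp Require Import all_boot all_order all_algebra all_fingroup.
Set Implicit Arguments. Unset Strict Implicit. Unset Printing Implicit Defensive.
Import GRing.Theory.
Local Open Scope ring_scope.

(* A binary linear code of length n is represented by its canonical
   row-space matrix C : 'M['F_2]_n, i.e. a matrix with <<C>> = C.
   Its codewords are the row vectors in the row space of C. *)

Section Codes.
Variables (t k : nat).
Local Notation n := (t * k)%N.

Lemma blk_proof (j : 'I_n) : (j %/ k < t)%N.
Proof.
case: k j => [|k'] j; first by case: j => m; rewrite muln0.
by rewrite ltn_divLR // ltn_ord.
Qed.

Lemma off_proof (j : 'I_n) : (j %% k < k)%N.
Proof.
case: k j => [|k'] j; first by case: j => m; rewrite muln0.
by rewrite ltn_pmod.
Qed.

Definition blk (j : 'I_n) : 'I_t := Ordinal (blk_proof j).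
Definition off (j : 'I_n) : 'I_k := Ordinal (off_proof j).

Definition permc (s : 'S_n) (C : 'M['F_2]_n) : 'M['F_2]_n :=
  (<< col_perm s C >>)%MS.

Definition colsel (I : {set 'I_n}) (C : 'M['F_2]_n) : 'M['F_2]_n :=
  \matrix_(i, j) (if j \in I then C i j else 0).

Definition info_set (C : 'M['F_2]_n) (I : {set 'I_n}) : bool :=
  (#|I| == k) && (\rank (colsel I C) == k).

Definition tCIS (C : 'M['F_2]_n) : bool :=
  [exists P : {ffun 'I_t -> {set 'I_n}},
    [&& [forall i, info_set C (P i)],
        [forall i, forall j, (i != j) ==> [disjoint P i & P j]]
      & \bigcup_(i < t) P i == [set: 'I_n]]].

Definition is_code (C : 'M['F_2]_n) : bool :=
  (<< C >>%MS == C) && (\rank C == k).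

Definition codes : {set 'M['F_2]_n} :=
  [set C | is_code C && tCIS C].

Definition sysgen (B : 'I_t -> 'M['F_2]_k) : 'M['F_2]_(k, n) :=
  \matrix_(i, j) B (blk j) i (off j).

Definition systematic (C : 'M['F_2]_n) : bool :=
  [exists B : {ffun 'I_t -> 'M['F_2]_k},
    [&& [forall j : 'I_t, (nat_of_ord j == 0%N) ==> (B j == 1%:M)],
        [forall j : 'I_t, B j \in unitmx]
      & (sysgen B == C)%MS]].

Definition codes_sys : {set 'M['F_2]_n} :=
  [set C in codes | systematic C].

Definition orbit_code (C : 'M['F_2]_n) : {set 'M['F_2]_n} :=
  [set permc s C | s in [set: 'S_n]].

End Codes.

Definition gk (k : nat) : nat := #|[set M : 'M['F_2]_k | M \in unitmx]|.

(* Systematic codes are t-CIS codes, so the orbits of the representatives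
   partition them and the traces of the orbits add up to the number of
   systematic codes.  A systematic code is determined by the blocks
   (A_1, ..., A_{t-1}) of its generator matrix (I_k | A_1 | ... | A_{t-1}):
   two such matrices with the same row space differ by a left factor, which
   the first block forces to be I_k.  Conversely the coordinate blocks of
   such a matrix are disjoint information sets, so every choice of the A_j
   in GL(k,2) gives a systematic code; there are g_k^(t-1) of them. *)

From HB Require Import structures.
From mathcomp Require Import all_boot all_order all_algebra all_fingroup.
Set Implicit Arguments. Unset Strict Implicit. Unset Printing Implicit Defensive.
Import GRing.Theory.
Local Open Scope ring_scope.

Section Orbits.
Variables t k : nat.
Local Notation n := (t * k)%N.
Implicit Types (C D : 'M['F_2]_n) (S : {set 'M['F_2]_n}).

Lemma permcM (u v : 'S_n) D : permc u (permc v D) = permc (u * v)%g D.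
Proof.
rewrite /permc col_permM; apply: eq_genmx.
by rewrite !col_permE; apply: eqmxMr; apply: genmxE.
Qed.

Lemma orbit_code_eq C D : C \in orbit_code D -> orbit_code C = orbit_code D.
Proof.
case/imsetP => v _ ->; apply/setP => X; apply/imsetP/imsetP.
  by case=> u _ ->; exists (u * v)%g; rewrite ?inE // permcM.
case=> u _ ->; exists (u * v^-1)%g; rewrite ?inE // permcM.
by rewrite -mulgA mulVg mulg1.
Qed.

Lemma sum_card_orbit_codeI s (Crep : 'I_s -> 'M['F_2]_n) S :
  (forall i j, i != j -> orbit_code (Crep i) != orbit_code (Crep j)) ->
  (forall C, C \in S -> exists i, C \in orbit_code (Crep i)) ->
  (\sum_(i < s) #|orbit_code (Crep i) :&: S|)%N = #|S|.
Proof.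
move=> Hdist Hcover.
have cardI i : #|orbit_code (Crep i) :&: S| =
               (\sum_(C in S) (C \in orbit_code (Crep i)))%N.
  rewrite -sum1_card big_mkcond [RHS]big_mkcond /=.
  by apply: eq_bigr => C _; rewrite inE; case: (C \in S); case: (C \in _).
rewrite (eq_bigr _ (fun i _ => cardI i)) exchange_big /= -sum1_card.
apply: eq_bigr => C /Hcover[i0 HCi0].
rewrite (bigD1 i0) //= HCi0 big1 // => j Hj.
case HCj: (C \in orbit_code (Crep j)) => //.
by have := Hdist j i0 Hj; rewrite -(orbit_code_eq HCj) -(orbit_code_eq HCi0) eqxx.
Qed.

End Orbits.

Lemma rank_colsub_le (F : fieldType) m n n' (f : 'I_n' -> 'I_n) (A : 'M[F]_(m, n)) :
  (\rank (colsub f A) <= \rank A)%N.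
Proof. by rewrite -[A in colsub _ A]mulmx1 -mulmx_colsub mxrankM_maxl. Qed.

Section Blocks.
Variables t k : nat.
Local Notation n := (t * k)%N.

Lemma idx_subproof (i : 'I_t) (c : 'I_k) : (i * k + c < n)%N.
Proof.
apply: (@leq_trans (i.+1 * k)); first by rewrite mulSn [(k + _)%N]addnC ltn_add2l.
by rewrite leq_mul2r ltn_ord orbT.
Qed.

Definition idx (i : 'I_t) (c : 'I_k) : 'I_n := Ordinal (idx_subproof i c).

Lemma blk_idx i c : blk (idx i c) = i.
Proof.
have k_gt0 : (0 < k)%N by case: c => m; case: k.
by apply: val_inj; rewrite /= divnMDl // divn_small // addn0.
Qed.

Lemma off_idx i c : off (idx i c) = c.
Proof. by apply: val_inj; rewrite /= modnMDl modn_small. Qed.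

Lemma idx_blk_off (j : 'I_n) : idx (blk j) (off j) = j.
Proof. by apply: val_inj; rewrite /= -divn_eq. Qed.

Definition block (i : 'I_t) : {set 'I_n} := [set j | blk j == i].

Lemma blockE i : block i = [set idx i c | c in [set: 'I_k]].
Proof.
apply/setP => j; rewrite inE; apply/eqP/imsetP.
  by move=> <-; exists (off j); rewrite ?inE ?idx_blk_off.
by case=> c _ ->; rewrite blk_idx.
Qed.

Lemma card_block i : #|block i| = k.
Proof.
rewrite blockE card_imset ?cardsT ?card_ord // => c1 c2 E.
by rewrite -(off_idx i c1) E off_idx.
Qed.

Lemma colsub_sysgen (B : 'I_t -> 'M['F_2]_k) i : colsub (idx i) (sysgen B) = B i.
Proof. by apply/matrixP => r c; rewrite !mxE blk_idx off_idx. Qed.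

Lemma colsel_mulmx (I : {set 'I_n}) (M : 'M['F_2]_n) :
  colsel I M = M *m colsel I 1%:M.
Proof.
apply/matrixP => r j; rewrite !mxE.
under eq_bigr => l _ do rewrite mxE.
case: (j \in I); last by rewrite big1 // => l _; rewrite mulr0.
by rewrite -[in LHS](mulmx1 M) mxE.
Qed.

Lemma colsub_mul_colsel_block m (A : 'M['F_2]_(m, n)) i :
  colsub (idx i) (A *m colsel (block i) 1%:M) = colsub (idx i) A.
Proof.
rewrite -mulmx_colsub -[in RHS](mulmx1 A) -mulmx_colsub; congr (_ *m _).
by apply/matrixP => r c; rewrite !mxE inE blk_idx eqxx.
Qed.

End Blocks.

Arguments block {t k} i.

Section Systematic.
Variables t k : nat.
Local Notation n := (t * k)%N.
Implicit Types B : {ffun 'I_t -> 'M['F_2]_k}.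

Definition sys_blocks : {set {ffun 'I_t -> 'M['F_2]_k}} :=
  [set B : {ffun 'I_t -> 'M['F_2]_k} |
    [forall j : 'I_t, (nat_of_ord j == 0%N) ==> (B j == 1%:M)] &&
    [forall j : 'I_t, B j \in unitmx]].

Definition sys_code B : 'M['F_2]_n := (<< sysgen B >>)%MS.

Lemma rank_sysgen B i : B i \in unitmx -> \rank (sysgen B) = k.
Proof.
move=> unitB; apply/eqP; rewrite eqn_leq rank_leq_row -{1}(mxrank_unit unitB).
by rewrite -(colsub_sysgen B) rank_colsub_le.
Qed.

Lemma info_set_block B i :
  B i \in unitmx -> info_set (sys_code B) (block i).
Proof.
move=> unitB; rewrite /info_set card_block eqxx /sys_code.
rewrite colsel_mulmx (eqmxMr _ (genmxE _)) eqn_leq rank_leq_row.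
rewrite -{1}(mxrank_unit unitB) -(colsub_sysgen B).
by rewrite -(colsub_mul_colsel_block (sysgen B)) rank_colsub_le.
Qed.

Lemma tCIS_sys_code B : (forall i, B i \in unitmx) -> tCIS (sys_code B).
Proof.
move=> unitB; apply/existsP; exists [ffun i => block i]; apply/and3P; split.
- by apply/forallP => i; rewrite ffunE info_set_block.
- apply/forallP => i; apply/forallP => j; apply/implyP => neq_ij.
  rewrite !ffunE -setI_eq0; apply/eqP/setP => x; rewrite /block !inE.
  by apply/negP => /andP[/eqP Ei /eqP Ej]; rewrite -Ei -Ej eqxx in neq_ij.
- apply/eqP/setP => j; rewrite inE; apply/bigcupP.
  by exists (blk j); rewrite ?ffunE /block ?inE.
Qed.

Hypothesis t_gt0 : (0 < t)%N.
Let i0 : 'I_t := Ordinal t_gt0.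

Lemma codes_sysE : codes_sys t k = [set sys_code B | B in sys_blocks].
Proof.
apply/setP => C; apply/idP/imsetP.
  rewrite !inE => /andP[/andP[/andP[/eqP genC _] _] /existsP[B /and3P[B0 BU eqBC]]].
  exists B; first by rewrite inE B0 BU.
  by rewrite /sys_code -genC; apply: eq_genmx; apply: eqmx_sym; apply/eqmxP.
case=> B; rewrite inE => /andP[B0 BU] ->.
have unitB i : B i \in unitmx by apply: (forallP BU).
rewrite !inE /is_code /sys_code genmx_id eqxx genmxE.
rewrite (rank_sysgen (unitB i0)) tCIS_sys_code // eqxx /=.
by apply/existsP; exists B; rewrite B0 BU; apply/eqmxP; exact: eqmx_sym (genmxE _).
Qed.

Lemma sys_code_inj : {in sys_blocks &, injective sys_code}.
Proof.
move=> B1 B2; rewrite !inE => /andP[B10 _] /andP[B20 _].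
move=> /genmxP/andP[/submxP[D eqD] _].
have first_id B : [forall j : 'I_t, (nat_of_ord j == 0%N) ==> (B j == 1%:M)] ->
                  B i0 = 1%:M.
  by move=> B0; apply/eqP; apply: (implyP (forallP B0 i0)).
have D1 : D = 1%:M.
  have := congr1 (colsub (idx i0)) eqD.
  by rewrite -mulmx_colsub !colsub_sysgen !first_id // mulmx1.
by apply/ffunP => j; rewrite -(colsub_sysgen B1) -(colsub_sysgen B2) eqD D1 mul1mx.
Qed.

End Systematic.

Lemma card_sys_blocks t k : (0 < t)%N -> #|sys_blocks t k| = (gk k ^ (t - 1))%N.
Proof.
case: t => [//|t'] _.
pose F (j : 'I_t'.+1) := if nat_of_ord j == 0%N then pred1 (1%:M : 'M['F_2]_k)
                         else [pred M : 'M['F_2]_k | M \in unitmx].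
have -> : #|sys_blocks t'.+1 k| = #|family F|.
  apply: eq_card => B; rewrite inE; apply/andP/familyP.
    by case=> B0 BU j; rewrite /F; case: ifP => j0 /=;
      [apply: (implyP (forallP B0 j) j0) | apply: (forallP BU j)].
  move=> BF; split; apply/forallP => j; have := BF j; rewrite /F.
    by case: ifP => //= _ ->.
  by case: ifP => //= _ /eqP ->; rewrite unitmx1.
rewrite card_family foldrE big_map big_enum big_ord_recl /F /= card1 mul1n subn1.
rewrite (eq_bigr (fun _ => gk k)) ?prod_nat_const ?card_ord // => i _.
by apply: eq_card => M; rewrite inE.
Qed.

Theorem proposition7 (k t : nat) (hk : (1 <= k)%N) (ht : (2 <= t)%N)
  (s : nat) (Crep : 'I_s -> 'M['F_2]_(t * k))
  (Hsys : forall i, Crep i \in codes_sys t k)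
  (Hdist : forall i j, i != j -> orbit_code (Crep i) != orbit_code (Crep j))
  (Hcover : forall C, C \in codes t k -> exists i, C \in orbit_code (Crep i)) :
  (gk k ^ (t - 1))%N = (\sum_(i < s) #|orbit_code (Crep i) :&: codes_sys t k|)%N.
Proof.
have t_gt0 : (0 < t)%N by apply: leq_trans ht.
rewrite sum_card_orbit_codeI // => [|C]; last first.
  by rewrite inE => /andP[C_code _]; apply: Hcover.
by rewrite codes_sysE // card_in_imset ?card_sys_blocks //; apply: sys_code_inj.
Qed.
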